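(* Suppose $f$ has equal algebraic and topological degrees $d=\lambda_2\ge 2$. Let $p\in\mathbb{P}^2$ be a point such that $f(p)$ is a regular value of $f$ with $\lambda_2$ distinct $f$-preimages, all outside $\mathcal{I}$. Let $L,L'$ be lines through $p$ that do not meet $\mathcal{I}$ and have distinct images $f(L)\neq f(L')$. Then at least one of the irreducible curves $f(L)$, $f(L')$ is not a line.
   Context: $f:\mathbb{P}^2\dashrightarrow\mathbb{P}^2$ is a dominant rational map with algebraic degree $d$, topological degree $\lambda_2$ (number of preimages of a generic point) and finite indeterminacy set $\mathcal{I}$. For a curve $V$, $f(V):=\overline{f(V\setminus\mathcal{I})}$. *)

(* Rational maps of P^2 over an algebraically closed field
   of characteristic 0, with trivariate polynomials encoded as nested
   univariate polynomials {poly {poly {poly F}}} (variables x0 outer, x1, x2 inner). *)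
From HB Require Import structures.
From mathcomp Require Import all_boot all_order all_algebra.
Set Implicit Arguments. Unset Strict Implicit. Unset Printing Implicit Defensive.
Import Order.TTheory GRing.Theory Num.Theory.
Local Open Scope ring_scope.

Section P2.
Variable F : closedFieldType.

Definition P3 := {poly {poly {poly F}}}.
(* homogeneous coordinates of points of P^2 (nonzero triples up to scaling) *)
Definition pt := (F * F * F)%type.

Definition coef3 (p : P3) (i j k : nat) : F := ((p`_i)`_j)`_k.

(* p is homogeneous of degree e (0 counts as homogeneous of every degree) *)
Definition homog (e : nat) (p : P3) : Prop :=
  forall i j k, coef3 p i j k != 0 -> (i + j + k)%N = e.

Definition eval3 (p : P3) (v : pt) : F :=
  (map_poly (fun q : {poly {poly F}} =>
      (map_poly (fun r : {poly F} => r.[v.2]) q).[v.1.2]) p).[v.1.1].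

Definition pd (j : 'I_3) (p : P3) : P3 :=
  match val j with
  | 0 => deriv p
  | 1 => map_poly deriv p
  | _ => map_poly (map_poly deriv) p
  end.

Definition nonzero (v : pt) : Prop := v <> (0, 0, 0).

Definition scale (c : F) (v : pt) : pt := (c * v.1.1, c * v.1.2, c * v.2).

Definition projeq (v w : pt) : Prop := exists2 c : F, c != 0 & w = scale c v.

Definition lin (m v : pt) : F := m.1.1 * v.1.1 + m.1.2 * v.1.2 + m.2 * v.2.

Definition fapply (f : 'I_3 -> P3) (v : pt) : pt :=
  (eval3 (f ord0) v, eval3 (f (inord 1)) v, eval3 (f (inord 2)) v).

Definition indet (f : 'I_3 -> P3) (v : pt) : Prop := fapply f v = (0, 0, 0).

(* S (a scaling-invariant predicate on homogeneous coordinates) consists of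
   exactly n distinct points of P^2 *)
Definition proj_card (S : pt -> Prop) (n : nat) : Prop :=
  exists s : seq pt, [/\ size s = n,
    forall v, v \in s -> nonzero v /\ S v,
    forall i j, (i < size s)%N -> (j < size s)%N -> i <> j ->
       ~ projeq (nth (0,0,0) s i) (nth (0,0,0) s j) &
    forall v, nonzero v -> S v -> exists2 w, w \in s & projeq w v].

Definition finite_indet (f : 'I_3 -> P3) : Prop :=
  exists s : seq pt, forall v, nonzero v -> indet f v ->
    exists2 w, w \in s & projeq w v.

(* dominant: the image of P^2 \ I is not contained in any curve *)
Definition dominant (f : 'I_3 -> P3) : Prop :=
  forall (e : nat) (G : P3), homog e G -> G != 0 ->
    exists v, [/\ nonzero v, ~ indet f v & eval3 G (fapply f v) != 0].

(* f is a dominant rational map of algebraic degree d: the components are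
   homogeneous of degree d without nonconstant common factor *)
Definition ratmap_deg (f : 'I_3 -> P3) (d : nat) : Prop :=
  [/\ forall i, homog d (f i),
      (forall (h : P3) (q : 'I_3 -> P3), (forall i, f i = h * q i) -> homog 0 h)
    & dominant f].

Definition zclos (S : pt -> Prop) (y : pt) : Prop :=
  forall (e : nat) (G : P3), homog e G ->
    (forall v, nonzero v -> S v -> eval3 G v = 0) -> eval3 G y = 0.

(* topological degree: a generic point (outside some curve G = 0) has
   exactly lam preimages in P^2 \ I *)
Definition fiber (f : 'I_3 -> P3) (q : pt) : pt -> Prop :=
  fun x => ~ indet f x /\ projeq (fapply f x) q.

Definition topdeg (f : 'I_3 -> P3) (lam : nat) : Prop :=
  exists (e : nat) (G : P3), [/\ homog e G, G != 0 &
    forall q, nonzero q -> eval3 G q != 0 -> proj_card (fiber f q) lam].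

Definition jac (f : 'I_3 -> P3) (v : pt) : F :=
  \det (\matrix_(i < 3, j < 3) eval3 (pd j (f i)) v).

(* f(V) := closure of f(V \ I), V the line {lin l = 0} *)
Definition img_line (f : 'I_3 -> P3) (l : pt) : pt -> Prop :=
  zclos (fun y => exists x, [/\ nonzero x, lin l x = 0, ~ indet f x &
                               projeq (fapply f x) y]).

Definition sameset (A B : pt -> Prop) : Prop :=
  forall y, nonzero y -> (A y <-> B y).

Definition is_line (A : pt -> Prop) : Prop :=
  exists2 m, nonzero m & sameset A (fun y => lin m y = 0).

End P2.

From HB Require Import structures.
From mathcomp Require Import all_boot all_order all_algebra.
From mathcomp Require Import ring zify.
From Stdlib Require Import Classical.
Import GRing.Theory.
Local Open Scope ring_scope.
Set Implicit Arguments. Unset Strict Implicit.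

(** If f(L) and f(L') were the distinct lines {m = 0} and {m' = 0}, they would
    meet only at f(p).  Restricted to L, the form m' o f is a binary form of
    degree d; it is not identically zero, for otherwise all of L would lie over
    f(p).  Its d roots are points of L over f(p), and they are simple: m o f
    vanishes along L, and by Euler's identity both m o f and m' o f have
    gradients killing the radial direction, so at a double root a combination
    of m and m' would lie in the left kernel of the Jacobian, which is
    invertible on the fibre.  Hence the fibre, which has exactly d points, lies
    on L, and likewise on L'.  As d >= 2 it contains two distinct points, so
    L = L' and f(L) = f(L'). *)

Lemma map_polyMX (A B : nzRingType) (g : {additive A -> B}) (p : {poly A}) :
  map_poly g (p * 'X) = map_poly g p * 'X.
Proof.
by apply/polyP=> i; rewrite coefMX !coef_map coefMX; case: i => [|i] //=; rewrite raddf0.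
Qed.

Lemma map_polyMr (A B : nzRingType) (g : A -> B) (k : B) (p : {poly A}) :
  g 0 = 0 -> map_poly (fun a => g a * k) p = map_poly g p * k%:P.
Proof. by move=> g0; apply/polyP=> i; rewrite coefMC !coef_map_id0 ?g0 ?mul0r. Qed.

Lemma map_polyDf (A B : nzRingType) (g h : A -> B) (p : {poly A}) :
  g 0 = 0 -> h 0 = 0 -> map_poly (fun a => g a + h a) p = map_poly g p + map_poly h p.
Proof. by move=> g0 h0; apply/polyP=> i; rewrite coefD !coef_map_id0 ?g0 ?h0 ?addr0. Qed.

Lemma horner_map_horner (A : nzRingType) (R : comNzRingType) (g : A -> {poly R})
    (p : {poly A}) (c : {poly R}) (t : R) :
  g 0 = 0 -> ((map_poly g p).[c]).[t] = (map_poly (fun a => (g a).[t]) p).[c.[t]].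
Proof.
move=> g0; rewrite -[LHS]/(horner_eval t _) -horner_map /=.
by rewrite -map_poly_comp_id0 ?raddf0.
Qed.

Lemma deriv_horner_map (A : nzRingType) (R : comNzRingType)
    (g : {additive A -> {poly R}}) (p : {poly A}) (c : {poly R}) :
  ((map_poly g p).[c])^`() =
  (map_poly (deriv \o g) p).[c] + (map_poly g p^`()).[c] * c^`().
Proof.
elim/poly_ind: p => [|p a IH]; first by rewrite !raddf0 !horner0 !raddf0 mul0r addr0.
rewrite derivMXaddC !raddfD /= !map_polyMX !map_polyC /= !(hornerD, hornerMX, hornerC).
by rewrite derivD derivM IH; ring.
Qed.

Lemma deriv_horner_comp (R : comNzRingType) (q : {poly {poly R}}) (c1 c2 : {poly R}) :
  ((map_poly (comp_poly c2) q).[c1])^`() =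
  (map_poly (comp_poly c2) (map_poly deriv q)).[c1] * c2^`()
  + (map_poly (comp_poly c2) q^`()).[c1] * c1^`().
Proof.
rewrite deriv_horner_map; congr (_ + _).
rewrite -[c2^`()](hornerC _ c1) -hornerM -map_polyMr ?comp_poly0 //.
rewrite -map_poly_comp_id0 ?comp_poly0 ?mul0r //.
by congr _.[_]; apply: eq_map_poly => r /=; rewrite deriv_comp.
Qed.

Lemma coefM_top (R : nzSemiRingType) (p q : {poly R}) m n :
  (size p <= m.+1)%N -> (size q <= n.+1)%N -> (p * q)`_(m + n) = p`_m * q`_n.
Proof.
move=> hp hq; rewrite coefM.
have hm : (m < (m + n).+1)%N by lia.
rewrite (bigD1 (Ordinal hm)) //= big1 ?addr0; first by rewrite addKn.
move=> [j hj] /= hne; case: (ltngtP j m) => h.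
- by rewrite (nth_default _ (_ : (size q <= m + n - j)%N)) ?mulr0 //; lia.
- by rewrite (nth_default _ (_ : (size p <= j)%N)) ?mul0r //; lia.
- by move: hne; rewrite -val_eqE /= h eqxx.
Qed.

Section Geometry.
Variable F : closedFieldType.
Implicit Types (u v w m : pt F) (c : F).

Definition comb (al : F) (u : pt F) (be : F) (v : pt F) : pt F :=
  (al * u.1.1 + be * v.1.1, al * u.1.2 + be * v.1.2, al * u.2 + be * v.2).

Lemma pt_ext u v : u.1.1 = v.1.1 -> u.1.2 = v.1.2 -> u.2 = v.2 -> u = v.
Proof. by case: u => [[? ?] ?]; case: v => [[? ?] ?] /= -> -> ->. Qed.

Lemma nonzero_coord u : nonzero u -> [\/ u.1.1 != 0, u.1.2 != 0 | u.2 != 0].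
Proof.
case: u => [[a b] c] /= h.
have [a0|] := eqVneq a 0; last by constructor 1.
have [b0|] := eqVneq b 0; last by constructor 2.
have [c0|] := eqVneq c 0; last by constructor 3.
by case: h; rewrite a0 b0 c0.
Qed.

Lemma scale1 u : scale 1 u = u.
Proof. by apply: pt_ext; rewrite /scale /= mul1r. Qed.

Lemma scale_eq0 c u : nonzero u -> scale c u = (0, 0, 0) -> c = 0.
Proof.
move=> /nonzero_coord hu [h1 h2 h3].
by case: hu => /negPf hu; apply/eqP; rewrite -[_ == _]orbF -hu -mulf_eq0 ?h1 ?h2 ?h3.
Qed.

Lemma scale_nonzero c u : c != 0 -> nonzero u -> nonzero (scale c u).
Proof. by move=> hc hu /(scale_eq0 hu) c0; rewrite c0 eqxx in hc. Qed.

Lemma projeq_sym u v : projeq u v -> projeq v u.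
Proof.
case=> c hc ->; exists c^-1; first by rewrite invr_eq0.
by apply: pt_ext; rewrite /scale /= mulrA mulVf ?mul1r.
Qed.

Lemma projeq_trans u v w : projeq u v -> projeq v w -> projeq u w.
Proof.
case=> c hc ->; case=> e he ->; exists (e * c); first by rewrite mulf_neq0.
by apply: pt_ext; rewrite /scale /= mulrA.
Qed.

Lemma linC u v : lin u v = lin v u.
Proof. by rewrite /lin; ring. Qed.

Lemma lin_scale m v c : lin m (scale c v) = c * lin m v.
Proof. by rewrite /lin /scale /=; ring. Qed.

Lemma lin_comb m u v al be : lin m (comb al u be v) = al * lin m u + be * lin m v.
Proof. by rewrite /lin /comb /=; ring. Qed.

Lemma lin_projeq m m' : projeq m m' -> forall y, lin m y = 0 <-> lin m' y = 0.
Proof.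
case=> c hc -> y; rewrite [lin (scale _ _) _]linC lin_scale linC.
by split=> [->|/eqP]; rewrite ?mulr0 // mulf_eq0 (negPf hc) => /eqP.
Qed.

Definition cross u v : pt F :=
  (u.1.2 * v.2 - u.2 * v.1.2, u.2 * v.1.1 - u.1.1 * v.2, u.1.1 * v.1.2 - u.1.2 * v.1.1).

Lemma cross_eq0 u v : nonzero u -> cross u v = (0, 0, 0) -> exists c, v = scale c u.
Proof.
case: u => [[u0 u1] u2]; case: v => [[v0 v1] v2]; rewrite /cross /=.
move=> /nonzero_coord /= hu [/eqP e1 /eqP e2 /eqP e3].
move: e1 e2 e3; rewrite !subr_eq0 => /eqP e1 /eqP e2 /eqP e3.
have pivot (x y z w : F) : x != 0 -> x * y = z * w -> y = w / x * z.
  by move=> hx h; rewrite -[y](mulKf hx) h; ring.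
case: hu => hu; [exists (v0 / u0) | exists (v1 / u1) | exists (v2 / u2)];
  apply: pt_ext; rewrite /scale /= ?divfK //; apply: pivot => //; exact/esym.
Qed.

Lemma cross_neq0 u v : nonzero u -> nonzero v -> ~ projeq u v -> nonzero (cross u v).
Proof.
move=> hu hv huv /(cross_eq0 hu) [c ec]; apply: huv; exists c => //.
by apply: contra_notN hv => /eqP c0; rewrite ec c0; apply: pt_ext; rewrite /scale /= mul0r.
Qed.

Lemma lin_eq0_cross w u v : lin w u = 0 -> lin w v = 0 -> nonzero (cross u v) ->
  exists c, w = scale c (cross u v).
Proof.
move=> hu hv huv; apply: cross_eq0 => //.
have -> : cross (cross u v) w = (v.1.1 * lin w u - u.1.1 * lin w v,
    v.1.2 * lin w u - u.1.2 * lin w v, v.2 * lin w u - u.2 * lin w v).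
  by apply: pt_ext; rewrite /cross /lin /=; ring.
by rewrite hu hv !mulr0 subrr.
Qed.

Lemma projeq_of_orth2 u v x y :
  nonzero u -> nonzero v -> nonzero (cross x y) ->
  lin u x = 0 -> lin u y = 0 -> lin v x = 0 -> lin v y = 0 -> projeq u v.
Proof.
move=> hu hv hxy hux huy hvx hvy.
have [c eu] := lin_eq0_cross hux huy hxy; have [c' ev] := lin_eq0_cross hvx hvy hxy.
subst u v.
have c_nz : c != 0 by apply: contra_notN hu => /eqP ->; apply: pt_ext; rewrite /scale /= mul0r.
have c'_nz : c' != 0 by apply: contra_notN hv => /eqP ->; apply: pt_ext; rewrite /scale /= mul0r.
exists (c' / c); first by rewrite mulf_neq0 ?invr_eq0.
by apply: pt_ext; rewrite /scale /=; field.
Qed.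

Lemma cross_comb u v al be :
  cross (comb al u be v) v = scale al (cross u v) /\
  cross u (comb al u be v) = scale be (cross u v).
Proof. by split; apply: pt_ext; rewrite /cross /comb /scale /=; ring. Qed.

Lemma comb_eq0 u v al be :
  nonzero (cross u v) -> comb al u be v = (0, 0, 0) -> al = 0 /\ be = 0.
Proof.
move=> huv h0; have [e1 e2] := cross_comb u v al be; rewrite h0 in e1 e2.
by split; apply: (scale_eq0 huv); [rewrite -e1 | rewrite -e2];
  apply: pt_ext; rewrite /cross /=; ring.
Qed.

Lemma cross_nonzeroC u v : nonzero (cross u v) -> nonzero (cross v u).
Proof.
have -> : cross v u = scale (-1) (cross u v).
  by apply: pt_ext; rewrite /cross /scale /=; ring.
by apply: scale_nonzero; rewrite oppr_eq0 oner_eq0.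
Qed.

Lemma comb1_nonzero a b t : nonzero (cross a b) -> nonzero (comb 1 a t b).
Proof. by move=> hab /(comb_eq0 hab) [/eqP]; rewrite oner_eq0. Qed.

Lemma projeq_comb1 a b s t :
  nonzero (cross a b) -> projeq (comb 1 a s b) (comb 1 a t b) -> s = t.
Proof.
move=> hab [c _ e].
have : cross (comb 1 a s b) (comb 1 a t b) = scale (t - s) (cross a b).
  by apply: pt_ext; rewrite /cross /comb /scale /=; ring.
rewrite e; have -> : cross (comb 1 a s b) (scale c (comb 1 a s b)) = (0, 0, 0).
  by apply: pt_ext; rewrite /cross /scale /=; ring.
by move/esym/(scale_eq0 hab)/eqP; rewrite subr_eq0 => /eqP.
Qed.

Lemma line_basis l : nonzero l ->
  exists a b, [/\ lin l a = 0, lin l b = 0 & nonzero (cross a b)].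
Proof.
case: l => [[l0 l1] l2] /nonzero_coord /= [h|h|h].
- exists (- l1, l0, 0), (- l2, 0, l0); split; try by rewrite /lin /=; ring.
  move/(congr1 (fun w : pt F => w.1.1)); rewrite /cross /= => e.
  have : l0 * l0 == 0 by apply/eqP; rewrite -e; ring.
  by rewrite mulf_eq0 orbb (negbTE h).
- exists (l1, - l0, 0), (0, - l2, l1); split; try by rewrite /lin /=; ring.
  move/(congr1 (fun w : pt F => w.1.2)); rewrite /cross /= => e.
  have : - (l1 * l1) == 0 by apply/eqP; rewrite -e; ring.
  by rewrite oppr_eq0 mulf_eq0 orbb (negbTE h).
- exists (l2, 0, - l0), (0, l2, - l1); split; try by rewrite /lin /=; ring.
  move/(congr1 (fun w : pt F => w.2)); rewrite /cross /= => e.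
  have : l2 * l2 == 0 by apply/eqP; rewrite -e; ring.
  by rewrite mulf_eq0 orbb (negbTE h).
Qed.

End Geometry.

Section Trivariate.
Variable F : closedFieldType.
Implicit Types (P : P3 F) (v : pt F).

Definition eval3_map (R : comNzRingType) (phi : F -> R) (c : R * R * R) P : R :=
  (map_poly (fun q => (map_poly (fun r => (map_poly phi r).[c.2]) q).[c.1.2]) P).[c.1.1].

Lemma eval3E P v : eval3 P v = eval3_map id v P.
Proof.
rewrite /eval3; congr _.[_]; apply: eq_map_poly => q /=.
by congr _.[_]; apply: eq_map_poly => r /=; rewrite map_poly_id.
Qed.

Lemma homog_size d P : homog d P ->
  [/\ (size P <= d.+1)%N, forall i, (size (P`_i)%R <= d.+1)%N &
      forall i j, (size ((P`_i)`_j)%R <= d.+1)%N].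
Proof.
move=> hP; have hi i j k : (d < i + j + k)%N -> ((P`_i)`_j)`_k = 0.
  by move=> hd; apply/eqP; apply: contraTT hd => /hP ->; rewrite ltnn.
split=> [|i|i j]; apply/leq_sizeP => n hn.
- by apply/polyP=> j; apply/polyP=> k; rewrite !coef0 hi //; lia.
- by apply/polyP=> k; rewrite coef0 hi //; lia.
- by rewrite hi //; lia.
Qed.

Lemma eval3_map_expand (R : comNzRingType) (phi : F -> R) (c : R * R * R) d P :
  phi 0 = 0 -> homog d P ->
  eval3_map phi c P = \sum_(i < d.+1) \sum_(j < d.+1) \sum_(k < d.+1)
      phi (coef3 P i j k) * c.2 ^+ k * c.1.2 ^+ j * c.1.1 ^+ i.
Proof.
move=> phi0 /homog_size [s0 s1 s2].
have size_map (A : nzRingType) (g : A -> R) p : g 0 = 0 -> (size (map_poly g p) <= size p)%N.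
  by move=> g0; apply/leq_sizeP=> j hj; rewrite coef_map_id0 // nth_default.
pose G2 r := (map_poly phi r).[c.2].
pose G1 q := (map_poly G2 q).[c.1.2].
have G20 : G2 0 = 0 by rewrite /G2 map_poly0 horner0.
have G10 : G1 0 = 0 by rewrite /G1 map_poly0 horner0.
rewrite /eval3_map -/G2 -/G1 (horner_coef_wide _ (leq_trans (size_map _ _ _ G10) s0)).
apply: eq_bigr => i _; rewrite coef_map_id0 // /G1.
rewrite (horner_coef_wide _ (leq_trans (size_map _ _ _ G20) (s1 i))) mulr_suml.
apply: eq_bigr => j _; rewrite coef_map_id0 // /G2.
rewrite (horner_coef_wide _ (leq_trans (size_map _ _ _ phi0) (s2 i j))) !mulr_suml.
by apply: eq_bigr => k _; rewrite coef_map_id0.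
Qed.

Lemma eval3_scale d P v c : homog d P -> eval3 P (scale c v) = c ^+ d * eval3 P v.
Proof.
move=> hP; rewrite !eval3E !(eval3_map_expand _ _ hP) // mulr_sumr.
apply: eq_bigr => i _; rewrite mulr_sumr; apply: eq_bigr => j _.
rewrite mulr_sumr; apply: eq_bigr => k _.
have [->|/hP hd] := eqVneq (coef3 P i j k) 0; first by rewrite !mul0r mulr0.
have -> : c ^+ d = c ^+ i * c ^+ j * c ^+ k by rewrite -!exprD hd.
by rewrite /scale /= !exprMn; ring.
Qed.

End Trivariate.

Section LineRestriction.
Variable F : closedFieldType.
Implicit Types (P : P3 F) (a b x : pt F).

Definition line_poly (x y : F) : {poly F} := x%:P + y *: 'X.

Definition restr a b P : {poly F} :=
  eval3_map polyC (line_poly a.1.1 b.1.1, line_poly a.1.2 b.1.2, line_poly a.2 b.2) P.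

Lemma horner_line_poly (x y t : F) : (line_poly x y).[t] = x + t * y.
Proof. by rewrite /line_poly hornerD hornerC hornerZ hornerX mulrC. Qed.

Lemma deriv_line_poly (x y : F) : (line_poly x y)^`() = y%:P.
Proof. by rewrite /line_poly derivD derivC derivZ derivX add0r alg_polyC. Qed.

Lemma horner_restr a b P t : (restr a b P).[t] = eval3 P (comb 1 a t b).
Proof.
rewrite /restr /eval3_map horner_map_horner ?map_poly0 ?horner0 //.
rewrite eval3E /eval3_map /= !horner_line_poly !mul1r.
congr _.[_]; apply: eq_map_poly => q /=.
rewrite horner_map_horner ?map_poly0 ?horner0 // horner_line_poly.
congr _.[_]; apply: eq_map_poly => r /=.
by rewrite -[_.[_]]/((r \Po _).[t]) horner_comp horner_line_poly map_poly_id.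
Qed.

Lemma deriv_restr a b P :
  (restr a b P)^`() = restr a b (map_poly (map_poly deriv) P) * b.2%:P
    + restr a b (map_poly deriv P) * b.1.2%:P + restr a b P^`() * b.1.1%:P.
Proof.
set c0 := line_poly a.1.1 b.1.1; set c1 := line_poly a.1.2 b.1.2.
set c2 := line_poly a.2 b.2.
pose cfu : commr_rmorph (comp_poly c2) c1 := fun r => mulrC _ _.
(* Unfolded, [restr] is a tower of ring morphisms; this gives [deriv_horner_map]
   the additive structure it needs. *)
have restrE Q : restr a b Q = (map_poly (horner_morph cfu) Q).[c0] by [].
rewrite !restrE deriv_horner_map (eq_map_poly (fun q => deriv_horner_comp q c1 c2)).
rewrite map_polyDf ?raddf0 ?horner0 ?mul0r //.
rewrite (map_polyMr (g := fun q => horner_morph cfu (map_poly deriv q))) ?raddf0 //.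
rewrite (map_polyMr (g := fun q => horner_morph cfu q^`())) ?raddf0 //.
by rewrite !hornerD !hornerM !hornerC !deriv_line_poly -!map_poly_comp.
Qed.

Definition grad P x : pt F :=
  (eval3 P^`() x, eval3 (map_poly deriv P) x, eval3 (map_poly (map_poly deriv) P) x).

Lemma horner_deriv_restr a b P t :
  (restr a b P)^`().[t] = lin (grad P (comb 1 a t b)) b.
Proof. by rewrite deriv_restr !hornerD !hornerM !hornerC !horner_restr /lin /=; ring. Qed.

Lemma line_poly_exp (x y : F) k :
  (size (line_poly x y ^+ k) <= k.+1)%N /\ (line_poly x y ^+ k)`_k = y ^+ k.
Proof.
have size_line : (size (line_poly x y) <= 2)%N.
  apply/leq_sizeP => -[|[|j]] hj //.
  by rewrite coefD coefC coefZ coefX mulr0 addr0.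
elim: k => [|k [IHs IHc]]; first by rewrite !expr0 size_poly1 coef1.
rewrite exprSr; split; first by apply: leq_trans (size_polyMleq _ _) _; lia.
rewrite -addn1 (coefM_top IHs size_line) IHc coefD coefC coefZ coefX /=.
by rewrite mulr1 add0r addn1 exprSr.
Qed.

Lemma line_poly_monomial a b i j k :
  let m := line_poly a.2 b.2 ^+ k * line_poly a.1.2 b.1.2 ^+ j * line_poly a.1.1 b.1.1 ^+ i in
  (size m <= (k + j + i).+1)%N /\ m`_(k + j + i) = b.2 ^+ k * b.1.2 ^+ j * b.1.1 ^+ i.
Proof.
have [s0 e0] := line_poly_exp a.1.1 b.1.1 i.
have [s1 e1] := line_poly_exp a.1.2 b.1.2 j.
have [s2 e2] := line_poly_exp a.2 b.2 k.
have s21 : (size (line_poly a.2 b.2 ^+ k * line_poly a.1.2 b.1.2 ^+ j)%R <= (k + j).+1)%N.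
  by apply: leq_trans (size_polyMleq _ _) _; lia.
split; first by apply: leq_trans (size_polyMleq _ _) _; lia.
by rewrite (coefM_top s21 s0) (coefM_top s2 s1) e0 e1 e2.
Qed.

Lemma restr_top d a b P : homog d P ->
  (size (restr a b P) <= d.+1)%N /\ (restr a b P)`_d = eval3 P b.
Proof.
move=> hP; rewrite /restr eval3E !(eval3_map_expand _ _ hP) //=; split.
  apply/leq_sizeP => n hn; rewrite !coef_sum; apply: big1 => i _.
  rewrite !coef_sum; apply: big1 => j _; rewrite !coef_sum; apply: big1 => k _.
  have [->|/hP hd] := eqVneq (coef3 P i j k) 0; first by rewrite !mul0r coef0.
  rewrite -!mulrA coefCM mulrA; have [hs _] := line_poly_monomial a b i j k.
  by rewrite (nth_default _ (leq_trans hs _)) ?mulr0 //; lia.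
rewrite !coef_sum; apply: eq_bigr => i _; rewrite !coef_sum; apply: eq_bigr => j _.
rewrite !coef_sum; apply: eq_bigr => k _.
have [->|/hP hd] := eqVneq (coef3 P i j k) 0; first by rewrite !mul0r coef0.
rewrite -!mulrA coefCM mulrA; have [_] := line_poly_monomial a b i j k.
by rewrite (_ : (k + j + i = d)%N); [move=> ->; rewrite !mulrA | lia].
Qed.

End LineRestriction.

Lemma proj_card_le (F : closedFieldType) (T : eqType) (S : pt F -> Prop) n
    (xs : seq T) (g : T -> pt F) :
  proj_card S n -> uniq xs -> {in xs, forall x, nonzero (g x) /\ S (g x)} ->
  {in xs &, forall x y, projeq (g x) (g y) -> x = y} -> (size xs <= n)%N.
Proof.
case=> s [<- _ _ hcov] uxs hS g_inj.
have tnth_inj := elimT (tuple_uniqP (in_tuple xs)) uxs.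
have /fin_all_exists [k hk] : forall i : 'I_(size xs), exists k : 'I_(size s),
    projeq (nth (0, 0, 0) s k) (g (tnth (in_tuple xs) i)).
  move=> i; have [nz Sy] := hS _ (mem_tnth i (in_tuple xs)).
  have [w ws pw] := hcov _ nz Sy; have hw : (index w s < size s)%N by rewrite index_mem.
  by exists (Ordinal hw); rewrite /= nth_index.
have k_inj : injective k.
  move=> i j kij; apply: tnth_inj; apply: g_inj; rewrite ?mem_tnth //.
  by apply: projeq_trans (projeq_sym (hk i)) _; rewrite kij.
by have := leq_card _ k_inj; rewrite !card_ord.
Qed.

Lemma proj_card_two (F : closedFieldType) (S : pt F -> Prop) n :
  proj_card S n -> (2 <= n)%N ->
  exists x y, [/\ nonzero x, nonzero y, S x, S y & nonzero (cross x y)].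
Proof.
case=> s [size_s s_in s_dist _] hn.
have s0 : (0 < size s)%N by rewrite size_s; apply: ltnW.
have s1 : (1 < size s)%N by rewrite size_s.
have [nz0 S0] := s_in _ (mem_nth (0, 0, 0) s0).
have [nz1 S1] := s_in _ (mem_nth (0, 0, 0) s1).
exists (nth (0, 0, 0) s 0), (nth (0, 0, 0) s 1); split=> //.
by apply: cross_neq0 => //; apply: s_dist.
Qed.

Section CharZero.
Variables (F : closedFieldType) (hchar : [pchar F] =i pred0).

Lemma natr_inj : injective (fun n : nat => n%:R : F).
Proof.
have hc := (pcharf0P F).1 hchar.
move=> i j /= eij; case: (ltngtP i j) => // hij; have := natrB F (ltnW hij);
  by rewrite eij subrr => /eqP; rewrite hc subn_eq0 leqNgt hij.
Qed.

Lemma poly_horner_eq0 (p : {poly F}) : (forall t, p.[t] = 0) -> p = 0.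
Proof.
move=> hp; apply/eqP; apply: contraT => p_nz.
have := max_poly_roots (rs := [seq i%:R | i <- iota 0 (size p)]) p_nz.
rewrite size_map size_iota ltnn; apply.
- by apply/allP => x /mapP [i _ ->]; apply/rootP.
- by rewrite map_inj_uniq ?iota_uniq //; apply: natr_inj.
Qed.

End CharZero.

Lemma deriv_prod_XsubC_eq0 (R : comNzRingType) (rs : seq R) : ~~ uniq rs ->
  exists2 z, z \in rs & (\prod_(x <- rs) ('X - x%:P))^`().[z] = 0.
Proof.
have rootQ (s : seq R) z : z \in s -> (\prod_(x <- s) ('X - x%:P)).[z] = 0.
  elim: s => [|x s IH] //; rewrite inE big_cons hornerM hornerXsubC.
  by case/orP => [/eqP ->|/IH ->]; rewrite ?subrr ?mul0r ?mulr0.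
elim: rs => [|x s IH] //=; rewrite negb_and negbK big_cons derivM derivXsubC mul1r.
case/orP => [xs|/IH [z zs hz]]; [exists x | exists z]; rewrite ?inE ?eqxx ?zs ?orbT //.
- by rewrite hornerD hornerM hornerXsubC subrr mul0r addr0 rootQ.
- by rewrite hornerD hornerM hz mulr0 addr0 rootQ.
Qed.

Section RationalMap.
Variables (F : closedFieldType) (f : 'I_3 -> P3 F).
Implicit Types (a b x m : pt F).

Definition grad_form m x : pt F :=
  (lin m (fapply (fun i => (f i)^`()) x),
   lin m (fapply (fun i => map_poly deriv (f i)) x),
   lin m (fapply (fun i => map_poly (map_poly deriv) (f i)) x)).

Definition restr_form m a b : {poly F} :=
  m.1.1 *: restr a b (f ord0) + m.1.2 *: restr a b (f (inord 1))
  + m.2 *: restr a b (f (inord 2)).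

Lemma horner_restr_form m a b t :
  (restr_form m a b).[t] = lin m (fapply f (comb 1 a t b)).
Proof. by rewrite /restr_form !hornerD !hornerZ !horner_restr. Qed.

Lemma horner_deriv_restr_form m a b t :
  (restr_form m a b)^`().[t] = lin (grad_form m (comb 1 a t b)) b.
Proof.
rewrite /restr_form !derivD !derivZ !hornerD !hornerZ !horner_deriv_restr.
by rewrite /grad_form /lin /fapply /=; ring.
Qed.

Lemma grad_form_comb x m m' al be :
  grad_form (comb al m be m') x = comb al (grad_form m x) be (grad_form m' x).
Proof. by apply: pt_ext; rewrite /grad_form /lin /comb /=; ring. Qed.

Definition coord (r : pt F) (i : 'I_3) : F :=
  match nat_of_ord i with 0 => r.1.1 | 1 => r.1.2 | _ => r.2 end.

Lemma jac_eq0 x r : nonzero r -> grad_form r x = (0, 0, 0) -> jac f x = 0.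
Proof.
move=> hr hgrad; apply/eqP/det0P; exists (\row_i coord r i).
  apply/eqP => /rowP h; apply: hr; apply: pt_ext.
  - by have := h ord0; rewrite !mxE.
  - by have := h (inord 1); rewrite !mxE /coord inordK.
  - by have := h (inord 2); rewrite !mxE /coord inordK.
have e1 : (lift ord0 ord0 : 'I_3) = inord 1 by apply/val_inj; rewrite /= inordK.
have e2 : (lift ord0 (lift ord0 ord0) : 'I_3) = inord 2.
  by apply/val_inj; rewrite /= inordK.
apply/rowP => j; rewrite !mxE !big_ord_recl big_ord0 !mxE addr0 e1 e2 /coord !inordK //=.
move: hgrad; rewrite /grad_form /lin /fapply /= => -[h0 h1 h2].
by case: j => [[|[|[|j]]] hj] //=; rewrite /pd /= addrA ?h0 ?h1 ?h2.
Qed.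

Lemma jac_neq0_transversal x b m m' :
  nonzero (cross x b) -> nonzero (cross m m') -> jac f x != 0 ->
  lin (grad_form m x) x = 0 -> lin (grad_form m x) b = 0 ->
  lin (grad_form m' x) x = 0 -> lin (grad_form m' x) b != 0.
Proof.
move=> hxb hmm jac_x hmx hmb hm'x; apply/eqP => hm'b.
have [al e] := lin_eq0_cross hmx hmb hxb.
have [be e'] := lin_eq0_cross hm'x hm'b hxb.
suff : jac f x = 0 by apply/eqP.
have [al0|al_nz] := eqVneq al 0.
  apply: (jac_eq0 (r := m)).
    by move=> m0; apply: hmm; rewrite m0; apply: pt_ext; rewrite /cross /=; ring.
  by rewrite e al0; apply: pt_ext; rewrite /scale /= mul0r.
apply: (jac_eq0 (r := comb be m (- al) m')).
  by move=> /(comb_eq0 hmm) [_ /eqP]; rewrite oppr_eq0 (negPf al_nz).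
by rewrite grad_form_comb e e'; apply: pt_ext; rewrite /comb /scale /=; ring.
Qed.

Variable d : nat.
Hypothesis hom : forall i, homog d (f i).

Lemma fapply_scale x c : fapply f (scale c x) = scale (c ^+ d) (fapply f x).
Proof. by apply: pt_ext; apply: eval3_scale. Qed.

Lemma restr_form_top m a b :
  (size (restr_form m a b) <= d.+1)%N /\ (restr_form m a b)`_d = lin m (fapply f b).
Proof.
have [s0 e0] := restr_top a b (@hom ord0).
have [s1 e1] := restr_top a b (@hom (inord 1)).
have [s2 e2] := restr_top a b (@hom (inord 2)).
split; last by rewrite /restr_form !coefD !coefZ e0 e1 e2.
apply/leq_sizeP => n hn; rewrite /restr_form !coefD !coefZ.
by rewrite !(nth_default _ (leq_trans _ hn)) ?mulr0 ?addr0.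
Qed.

Hypothesis hchar : [pchar F] =i pred0.

Lemma euler_grad_form m x : lin m (fapply f x) = 0 -> lin (grad_form m x) x = 0.
Proof.
move=> hx; have h0 : restr_form m x x = 0.
  apply: poly_horner_eq0 => // t; rewrite horner_restr_form.
  have -> : comb 1 x t x = scale (1 + t) x by apply: pt_ext; rewrite /comb /scale /=; ring.
  by rewrite fapply_scale lin_scale hx mulr0.
have := horner_deriv_restr_form m x x 0; rewrite h0 deriv0 horner0.
have -> : comb 1 x 0 x = x by apply: pt_ext; rewrite /comb /=; ring.
by move=> <-.
Qed.

Lemma grad_form_tangent m a b :
  (forall t, lin m (fapply f (comb 1 a t b)) = 0) ->
  forall z, lin (grad_form m (comb 1 a z b)) b = 0.
Proof.
move=> hline z; suff h0 : restr_form m a b = 0.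
  by rewrite -horner_deriv_restr_form h0 deriv0 horner0.
by apply: poly_horner_eq0 => // t; rewrite horner_restr_form.
Qed.

End RationalMap.

Section FiberOnLine.
Variables (F : closedFieldType) (hchar : [pchar F] =i pred0).
Variables (f : 'I_3 -> P3 F) (d : nat) (S : pt F -> Prop) (l m m' : pt F).
Hypotheses (hom : forall i, homog d (f i)) (hS : proj_card S d)
  (jac_S : forall x, nonzero x -> S x -> jac f x != 0).
Hypotheses (hl : nonzero l) (hmm' : nonzero (cross m m'))
  (image_in_m : forall y, nonzero y -> lin l y = 0 -> lin m (fapply f y) = 0)
  (S_of_meet : forall y, nonzero y -> lin l y = 0 -> lin m' (fapply f y) = 0 -> S y).

Lemma exists_direction_off : exists a b,
  [/\ lin l a = 0, lin l b = 0, nonzero (cross a b) & lin m' (fapply f b) != 0].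
Proof.
have [u [v [hu hv huv]]] := line_basis hl.
have on_l t : lin l (comb 1 u t v) = 0 by rewrite lin_comb hu hv !mulr0 addr0.
have [t ht] : exists t, lin m' (fapply f (comb 1 u t v)) != 0.
  apply: NNPP => hnot.
  (* otherwise the d + 1 points u + i v, i <= d, of L would all lie in S *)
  suff : (size (iota 0 d.+1) <= d)%N by rewrite size_iota ltnn.
  apply: (proj_card_le (g := fun i => comb 1 u i%:R v) hS (iota_uniq _ _)).
  - move=> i _; split; first exact: comb1_nonzero.
    apply: S_of_meet => //; first exact: comb1_nonzero.
    by apply/eqP; apply: contra_notT hnot => hi; exists i%:R.
  - by move=> i j _ _ /(projeq_comb1 huv) /(natr_inj hchar).
exists v, (comb 1 u t v); split=> //; apply: cross_nonzeroC.
by rewrite (cross_comb u v 1 t).1 scale1.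
Qed.

Lemma fiber_roots_on_line : exists a b (rs : seq F),
  [/\ lin l a = 0 /\ lin l b = 0, nonzero (cross a b), size rs = d, uniq rs &
      {in rs, forall z, S (comb 1 a z b)}].
Proof.
have [a [b [ha hb hab hb_off]]] := exists_direction_off.
have on_l t : lin l (comb 1 a t b) = 0 by rewrite lin_comb ha hb !mulr0 addr0.
have nz_ab t : nonzero (comb 1 a t b) := comb1_nonzero (t := t) hab.
pose h := restr_form f m' a b.
have [size_h coef_h] := restr_form_top hom m' a b.
have size_h' : size h = d.+1.
  apply/eqP; rewrite eqn_leq size_h ltnNge; apply: contra hb_off => hle.
  by rewrite -coef_h nth_default.
have [rs h_eq] := closed_field_poly_normal h.
have lc_nz : lead_coef h != 0 by rewrite lead_coef_eq0 -size_poly_gt0 size_h'.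
have root_h z : z \in rs -> h.[z] = 0.
  by move=> zr; apply/rootP; rewrite h_eq rootZ // root_prod_XsubC.
have S_root z : z \in rs -> S (comb 1 a z b).
  move=> zr; apply: S_of_meet; [exact: nz_ab | exact: on_l |].
  by rewrite -horner_restr_form root_h.
exists a, b, rs; split=> //.
  by move: size_h'; rewrite h_eq size_scale // size_prod_XsubC => -[].
apply: contraT => /deriv_prod_XsubC_eq0 [z zr dz].
pose x := comb 1 a z b.
have hxb : nonzero (cross x b) by rewrite (cross_comb a b 1 z).1 scale1.
have := jac_neq0_transversal hxb hmm' (jac_S (nz_ab z) (S_root z zr)).
rewrite (euler_grad_form hom hchar (image_in_m (nz_ab z) (on_l z))).
rewrite (grad_form_tangent hchar (fun t => image_in_m (nz_ab t) (on_l t))).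
rewrite (euler_grad_form hom hchar _); last by rewrite -horner_restr_form root_h.
rewrite -horner_deriv_restr_form -/h h_eq derivZ hornerZ dz mulr0 eqxx.
by move=> /(_ erefl erefl erefl).
Qed.

Lemma fiber_sub_line z0 : nonzero z0 -> S z0 -> lin l z0 = 0.
Proof.
move=> nz0 Sz0; have [a [b [rs [[ha hb] hab size_rs urs S_rs]]]] := fiber_roots_on_line.
have on_l t : lin l (comb 1 a t b) = 0 by rewrite lin_comb ha hb !mulr0 addr0.
apply/eqP; apply: contraT => off_l.
have not_z0 z : ~ projeq (comb 1 a z b) z0.
  move=> /lin_projeq /(_ l); rewrite !(linC _ l) on_l => -[/(_ erefl) /eqP].
  by rewrite (negPf off_l).
suff : (size (None :: map Some rs) <= d)%N by rewrite /= size_map size_rs ltnn.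
apply: (proj_card_le (g := oapp (fun z => comb 1 a z b) z0) hS).
- by rewrite /= (map_inj_uniq Some_inj) urs andbT; apply/negP => /mapP [].
- move=> [z|] //=; rewrite inE /= => /mapP [y yr [->]].
  by split; [exact: comb1_nonzero | exact: S_rs].
- move=> [z|] [z'|] //= _ _ => [/(projeq_comb1 hab) -> // | /not_z0 | ] //.
  by move/projeq_sym/not_z0.
Qed.

End FiberOnLine.

Section LineImages.
Variables (F : closedFieldType) (f : 'I_3 -> P3 F).
Implicit Types (k n : pt F).

Lemma img_line_eq k k' : (forall x, lin k x = 0 <-> lin k' x = 0) ->
  sameset (img_line f k) (img_line f k').
Proof.
move=> hkk' y _; split=> hy e G hG hv; apply: (hy e G hG) => x hx [z [hz hkz hzI hzx]];
  by apply: hv => //; exists z; split=> //; apply/hkk'.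
Qed.

Lemma line_image_in k n : sameset (img_line f k) (fun y => lin n y = 0) ->
  (forall x, nonzero x -> lin k x = 0 -> ~ indet f x) ->
  forall y, nonzero y -> lin k y = 0 -> lin n (fapply f y) = 0.
Proof.
move=> hkn hkI y hy hky; apply/(hkn _ (hkI y hy hky)) => e G hG hv.
apply: hv; first exact: hkI.
by exists y; split=> //; [exact: hkI | exists 1; rewrite ?oner_eq0 ?scale1].
Qed.

Lemma fiber_of_meet k n n' q : nonzero q -> nonzero (cross n n') ->
  lin n q = 0 -> lin n' q = 0 ->
  (forall x, nonzero x -> lin k x = 0 -> ~ indet f x) ->
  (forall y, nonzero y -> lin k y = 0 -> lin n (fapply f y) = 0) ->
  forall y, nonzero y -> lin k y = 0 -> lin n' (fapply f y) = 0 -> fiber f q y.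
Proof.
move=> hq hnn' hnq hn'q hkI f_k y hy hky hn'y; split; first exact: hkI.
by apply: (projeq_of_orth2 (hkI y hy hky) hq hnn'); rewrite linC ?f_k.
Qed.

End LineImages.

Theorem mainTheorem5 (F : closedFieldType) (hchar : [pchar F] =i pred0)
  (f : 'I_3 -> P3 F) (d : nat) :
  ratmap_deg f d -> finite_indet f ->
  topdeg f d -> (2 <= d)%N ->
  forall p : pt F, nonzero p -> ~ indet f p ->
  proj_card (fiber f (fapply f p)) d ->
  (forall x, nonzero x -> fiber f (fapply f p) x -> jac f x != 0) ->
  forall l l' : pt F, nonzero l -> nonzero l' ->
  lin l p = 0 -> lin l' p = 0 ->
  (forall x, nonzero x -> lin l x = 0 -> ~ indet f x) ->
  (forall x, nonzero x -> lin l' x = 0 -> ~ indet f x) ->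
  ~ sameset (img_line f l) (img_line f l') ->
  ~ is_line (img_line f l) \/ ~ is_line (img_line f l').
Proof.
move=> [hom _ _] _ _ hd2 p hp hpI hcard hjac l l' hl hl' hlp hl'p hlI hl'I hne.
apply: NNPP => /not_or_and [/NNPP [m hm hL] /NNPP [m' hm' hL']].
have f_l := line_image_in hL hlI; have f_l' := line_image_in hL' hl'I.
have hmm' : nonzero (cross m m').
  apply: cross_neq0 => // /lin_projeq hmm'; apply: hne => y hy.
  by rewrite (hL y hy) (hL' y hy).
have fib_l := fiber_sub_line hchar hom hcard hjac hl hmm' f_l
  (fiber_of_meet hpI hmm' (f_l p hp hlp) (f_l' p hp hl'p) hlI f_l).
have fib_l' := fiber_sub_line hchar hom hcard hjac hl' (cross_nonzeroC hmm') f_l'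
  (fiber_of_meet hpI (cross_nonzeroC hmm') (f_l' p hp hl'p) (f_l p hp hlp) hl'I f_l').
have [x [y [nzx nzy fib_x fib_y hxy]]] := proj_card_two hcard hd2.
apply: hne; apply/img_line_eq/lin_projeq.
by apply: (projeq_of_orth2 hl hl' hxy);
  [apply: fib_l | apply: fib_l | apply: fib_l' | apply: fib_l'].
Qed.
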